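(* (Weak duality.) Let $h\in\mathcal{M}_{\mathbb{F}}(0)$. Then for all $x\in\mathbb{R}^n$, \[ \sup_{\mathbf{u}\in\mathcal{U}_{\mathbb{F}}(0)} J(0,x;\mathbf{u})\;\le\;\mathbb{E}_{0,x}\Big[\sup_{\mathbf{u}\in\mathcal{U}(0)}\Big\{\Lambda(x_T)+\int_0^T g(t,x_t,u_t)\,dt-h(\mathbf{u},\mathbf{w})\Big\}\Big]. \]
   Context: Let $(\Omega,\mathcal{F},\mathbb{P})$ carry an $m$-dimensional Brownian motion $\mathbf{w}=(w_t)_{t\in[0,T]}$ with natural augmented filtration $\mathbb{F}=\{\mathcal{F}_t\}$, $\mathcal{F}=\mathcal{F}_T$. The controlled state $x_t\in\mathbb{R}^n$ follows $dx_t=b(t,x_t,u_t)\,dt+\sigma(t,x_t)\,dw_t$, $0\le t\le T$, where $u_t\in\mathcal{U}\subset\mathbb{R}^{d_u}$, $b:[0,T]\times\mathbb{R}^n\times\mathcal{U}\to\mathbb{R}^n$, $\sigma:[0,T]\times\mathbb{R}^n\to\mathbb{R}^{n\times m}$ are continuous, with $\|b(t,x,u)\|+\|\sigma(t,x)\|\le C_1(1+\|x\|+\|u\|)$ and $b,\sigma$ Lipschitz in $(t,x)$ uniformly in $u$. The set $\mathcal{U}_{\mathbb{F}}(t)$ of admissible strategies at time $t$ consists of $\mathbb{F}$-progressively measurable $\mathcal{U}$-valued processes $\mathbf{u}=(u_s)_{s\in[t,T]}$ with $\mathbb{E}[\int_t^T\|u_s\|^2ds]<\infty$ and $\mathbb{E}_{t,x}[\sup_{s\in[t,T]}\|x_s\|^2]<\infty$,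 where $\mathbb{E}_{t,x}[\cdot]=\mathbb{E}[\cdot\mid x_t=x]$. The set $\mathcal{U}(t)$ consists of all $\mathcal{B}([t,T])\times\mathcal{F}$-measurable $\mathcal{U}$-valued processes $(u_s)_{s\in[t,T]}$ (possibly anticipative). It is assumed that for each $\mathbf{u}\in\mathcal{U}(0)$ and initial condition $x_0=x$ the state equation has a unique $\mathcal{B}([0,T])\times\mathcal{F}$-measurable solution $(x_t)$, coinciding with the usual Itô solution when $\mathbf{u}\in\mathcal{U}_{\mathbb{F}}(0)$. Rewards $\Lambda:\mathbb{R}^n\to\mathbb{R}$, $g:[0,T]\times\mathbb{R}^n\times\mathcal{U}\to\mathbb{R}$ satisfy polynomial growth: $|\Lambda(x)|\le C_\Lambda(1+\|x\|^{c_\Lambda})$, $|g(t,x,u)|\le C_g(1+\|x\|^{c_g}+\|u\|^{c_g})$. $J(t,x;\mathbf{u})=\mathbb{E}_{t,x}[\Lambda(x_T)+\int_t^T g(s,x_s,u_s)ds]$. The set $\mathcal{M}_{\mathbb{F}}(0)$ of dual feasible penalties consists of functions $h(\mathbf{u},\mathbf{w})$ of a control strategy $\mathbf{u}\in\mathcal{U}(0)$ and a Brownian path $\mathbf{w}$ such that $\mathbb{E}_{0,x}[h(\mathbf{u},\mathbf{w})]\le 0$ for all $x\in\mathbb{R}^n$ and all $\mathbf{u}\in\mathcal{U}_{\mathbb{F}}(0)$. *)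

From HB Require Import structures.
From mathcomp Require Import all_boot all_order all_algebra.
From mathcomp Require Import all_classical all_reals all_analysis.
Set Implicit Arguments. Unset Strict Implicit. Unset Printing Implicit Defensive.
Import Order.TTheory GRing.Theory Num.Theory numFieldTopology.Exports numFieldNormedType.Exports.
Local Open Scope classical_set_scope.
Local Open Scope ring_scope.

Section Defs.
Context {R : realType}.

Definition sqnorm (k : nat) (v : 'rV[R]_k) : R := \sum_(i < k) (v ord0 i) ^+ 2.
Definition vnorm (k : nat) (v : 'rV[R]_k) : R := Num.sqrt (sqnorm v).

Definition borel_rV (k : nat) : set (set 'rV[R]_k) :=
  <<s [set A | exists (i : 'I_k) (B : set R), measurable B /\
                 A = (fun v : 'rV[R]_k => v ord0 i) @^-1` B] >>.

Definition borel_trip (n du : nat) : set (set (R * ('rV[R]_n * 'rV[R]_du))) :=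
  <<s [set A | exists B : set R, measurable B /\
          (A = (fun p : R * ('rV[R]_n * 'rV[R]_du) => p.1) @^-1` B
           \/ (exists i : 'I_n, A = (fun p : R * ('rV[R]_n * 'rV[R]_du) => p.2.1 ord0 i) @^-1` B)
           \/ (exists j : 'I_du, A = (fun p : R * ('rV[R]_n * 'rV[R]_du) => p.2.2 ord0 j) @^-1` B))] >>.

Definition tint (T : R) : set R := `[0, T].

Context {d : measure_display} {Omega : measurableType d}.

Definition indep_family (P : probability Omega R) (I : finType) (Y : I -> Omega -> R) :=
  (forall k, measurable_fun setT (Y k)) /\
  forall B : I -> set R, (forall k, measurable (B k)) ->
    P (\bigcap_(k in [set: I]) (Y k @^-1` B k)) = (\prod_(k : I) P (Y k @^-1` B k))%E.

Definition brownian_motion (P : probability Omega R) (m : nat) (T : R)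
    (w : R -> Omega -> 'rV[R]_m) :=
  (forall om, w 0 om = 0) /\
  (forall om (j : 'I_m), {within `[0, T], continuous (fun t : R => w t om ord0 j : R)}) /\
  forall (K : nat) (tt : 'I_K.+1 -> R),
    0 <= tt ord0 -> tt ord_max <= T ->
    (forall i : 'I_K, tt (widen_ord (leqnSn K) i) < tt (lift ord0 i)) ->
    let Y (p : 'I_K * 'I_m) (om : Omega) :=
      w (tt (lift ord0 p.1)) om ord0 p.2 - w (tt (widen_ord (leqnSn K) p.1)) om ord0 p.2 in
    indep_family P Y /\
    forall (p : 'I_K * 'I_m) (B : set R), measurable B ->
      P (Y p @^-1` B) =
      normal_prob 0 (Num.sqrt (tt (lift ord0 p.1) - tt (widen_ord (leqnSn K) p.1))) B.

Definition Pnull (P : probability Omega R) : set (set Omega) :=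
  [set N | exists A, measurable A /\ P A = 0%E /\ N `<=` A].

Definition filt (P : probability Omega R) (m : nat) (w : R -> Omega -> 'rV[R]_m)
    (t : R) : set (set Omega) :=
  <<s [set A | exists (s : R) (j : 'I_m) (B : set R),
          0 <= s <= t /\ measurable B /\ A = (fun om => w s om ord0 j) @^-1` B]
      `|` Pnull P >>.

Definition ctrl (du : nat) := R -> Omega -> 'rV[R]_du.

(** U(0): B([0,T]) x F-measurable, U-valued (possibly anticipative). *)
Definition U0 (du : nat) (T : R) (Uset : set 'rV[R]_du) (u : ctrl du) :=
  (forall t om, 0 <= t <= T -> Uset (u t om)) /\
  forall j : 'I_du,
    measurable_fun (`[0, T] `*` [set: Omega]) (fun p : R * Omega => u p.1 p.2 ord0 j).

Definition progressive (F : R -> set (set Omega)) (du : nat) (T : R) (u : ctrl du) :=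
  forall t, 0 <= t <= T ->
  forall (j : 'I_du) (B : set R), measurable B ->
    <<s `[0, t] `*` [set: Omega],
        [set C | exists (A : set R) (D : set Omega),
                   measurable A /\ A `<=` `[0, t] /\ F t D /\ C = A `*` D] >>
      ((`[0, t] `*` [set: Omega]) `&` (fun p : R * Omega => u p.1 p.2 ord0 j) @^-1` B).

(** U_F(0) for the initial state x (the state map X gives the controlled
    state path of the strategy u started at x_0 = x). *)
Definition UF (P : probability Omega R) (m n du : nat) (T : R)
    (w : R -> Omega -> 'rV[R]_m) (Uset : set 'rV[R]_du)
    (X : 'rV[R]_n -> ctrl du -> R -> Omega -> 'rV[R]_n)
    (x : 'rV[R]_n) (u : ctrl du) :=
  (forall t om, 0 <= t <= T -> Uset (u t om)) /\
  progressive (filt P w) T u /\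
  (\int[P]_om \int[lebesgue_measure]_(s in tint T) (sqnorm (u s om))%:E < +oo)%E /\
  (\int[P]_om ereal_sup [set (sqnorm (X x u s om))%:E | s in tint T] < +oo)%E.

Definition reward (n du : nat) (T : R) (Lam : 'rV[R]_n -> R)
    (g : R -> 'rV[R]_n -> 'rV[R]_du -> R)
    (X : 'rV[R]_n -> ctrl du -> R -> Omega -> 'rV[R]_n)
    (x : 'rV[R]_n) (u : ctrl du) (om : Omega) : \bar R :=
  ((Lam (X x u T om))%:E +
   \int[lebesgue_measure]_(t in tint T) (g t (X x u t om) (u t om))%:E)%E.

Definition Jval (P : probability Omega R) (n du : nat) (T : R) (Lam : 'rV[R]_n -> R)
    (g : R -> 'rV[R]_n -> 'rV[R]_du -> R)
    (X : 'rV[R]_n -> ctrl du -> R -> Omega -> 'rV[R]_n)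
    (x : 'rV[R]_n) (u : ctrl du) : \bar R :=
  (\int[P]_om reward T Lam g X x u om)%E.

(** The
    expectation E[h(u,w)] is required to exist (h(u,w) measurable, positive
    part integrable) and be <= 0 for every admissible u and every x. *)
Definition dual_feasible (P : probability Omega R) (m n du : nat) (T : R)
    (w : R -> Omega -> 'rV[R]_m) (Uset : set 'rV[R]_du)
    (X : 'rV[R]_n -> ctrl du -> R -> Omega -> 'rV[R]_n)
    (h : ctrl du -> (R -> 'rV[R]_m) -> R) :=
  forall (x : 'rV[R]_n) (u : ctrl du), UF P T w Uset X x u ->
    measurable_fun [set: Omega] (fun om => h u (fun t => w t om)) /\
    (\int[P]_om (Num.max (h u (fun t => w t om)) 0)%:E < +oo)%E /\
    (\int[P]_om (h u (fun t => w t om))%:E <= 0)%E.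

End Defs.

From HB Require Import structures.
From mathcomp Require Import all_boot all_order all_algebra.
From mathcomp Require Import all_classical all_reals all_analysis.
From mathcomp Require Import measurable_realfun lra.
Import Order.TTheory GRing.Theory Num.Theory.
Local Open Scope classical_set_scope.
Local Open Scope ereal_scope.

(* An adapted control is in particular an anticipative one, so pathwise the
   supremum over U(0) dominates [reward u - h u] for every u in U_F(0).
   Integrating, E[sup] >= E[reward u - h u] >= E[reward u] = J(0,x;u), the last
   step because E[h u] <= 0.  Since [reward u] need not be integrable, that step
   is carried out on positive and negative parts, using only the integrability
   of the positive part of [h u]. *)

Section positive_negative_parts.
Context (R : realType).
Implicit Types (r : \bar R) (c : R).

Let maxe0E (y : R) : maxe y%:E 0 = (Num.max y 0)%:E.
Proof. by rewrite EFin_max. Qed.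

Let max0_ge0 c : 0 <= (Num.max c 0)%:E.
Proof. by rewrite lee_fin le_max lexx orbT. Qed.

Lemma maxe0_subr_parts r c :
  maxe r 0 + maxe (- (r - c%:E)) 0 + (Num.max (- c) 0)%:E =
  maxe (r - c%:E) 0 + maxe (- r) 0 + (Num.max c 0)%:E.
Proof.
case: r => [x| |] /=; rewrite ?(addye, addNye, maxNye, maxye, add0e, leey) //.
rewrite -?EFinN -?EFinD !maxe0E -!EFinD; congr EFin; rewrite !maxEle.
by case: (lerP x 0); case: (lerP (- (x - c)) 0); case: (lerP (- c) 0);
  case: (lerP (x - c) 0); case: (lerP (- x) 0); case: (lerP c 0) => *; lra.
Qed.

Lemma maxe0_le_subr r c : maxe r 0 <= maxe (r - c%:E) 0 + (Num.max c 0)%:E.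
Proof.
case: r => [x| |] /=; rewrite ?(addye, addNye, maxNye, maxye, add0e, leey) //.
rewrite -?EFinD !maxe0E -EFinD lee_fin !maxEle.
by case: (lerP x 0); case: (lerP (x - c) 0); case: (lerP c 0) => *; lra.
Qed.

Lemma maxe0_oppe_subr_le r c :
  maxe (- (r - c%:E)) 0 <= maxe (- r) 0 + (Num.max c 0)%:E.
Proof.
case: r => [x| |] /=; rewrite ?(addye, addNye, maxNye, maxye, add0e, leey) //.
rewrite -?EFinN -?EFinD !maxe0E -EFinD lee_fin !maxEle.
by case: (lerP (- (x - c)) 0); case: (lerP (- x) 0); case: (lerP c 0) => *; lra.
Qed.
(* [a], [b], [A], [B], [c], [e] stand for the integrals of [f^+], [f^-],
   [(f - c)^+], [(f - c)^-], [c^+], [c^-] in [integral_le_subr] below. *)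
Lemma lee_sub_of_parts (a b A B c e : \bar R) :
  0 <= a -> 0 <= b -> 0 <= A -> 0 <= B -> 0 <= c -> c < +oo ->
  a + B + e = A + b + c -> a <= A + c -> B <= b + c -> c <= e ->
  a - b <= A - B.
Proof.
case: a => [a| |]; case: b => [b| |]; case: A => [A| |]; case: B => [B| |];
  case: c => [c| |]; case: e => [e| |] //=; rewrite ?lee_fin ?leey ?leNye //.
by move=> ? ? ? ? ? _ /eqP; rewrite -!EFinD eqe => /eqP ? ? ? ?; lra.
Qed.
End positive_negative_parts.

Section integral_comparison.
Context {d : measure_display} {T : measurableType d} {R : realType} (mu : measure T R).
Implicit Types f g : T -> \bar R.

(* No measurability is required: the integrand [ereal_sup ...] of the theorem
   is not known to be measurable. *)
Lemma ge0_le_integralT f g : (forall x, 0 <= f x) -> (forall x, f x <= g x) ->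
  \int[mu]_x f x <= \int[mu]_x g x.
Proof.
move=> f0 fg; have g0 x : 0 <= g x by apply: le_trans (fg x).
rewrite (ge0_integralTE _ f0) (ge0_integralTE _ g0).
apply: ge_ereal_sup => _ [k kf <-]; apply: ereal_sup_ubound.
by exists k => // x; apply: le_trans (fg x).
Qed.

Lemma le_integralT f g : (forall x, f x <= g x) ->
  \int[mu]_x f x <= \int[mu]_x g x.
Proof.
move=> fg; rewrite (integralE _ _ f) (integralE _ _ g); apply: leeB.
  by apply: ge0_le_integralT => // x; apply: (@funepos_le _ _ setT) => //; rewrite inE.
by apply: ge0_le_integralT => // x; apply: (@funeneg_le _ _ setT) => //; rewrite inE.
Qed.

Lemma integral_le_subr {f : T -> \bar R} {c : T -> R} :
  measurable_fun setT f -> measurable_fun setT c ->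
  \int[mu]_x (c^\+ x)%:E < +oo -> \int[mu]_x (c x)%:E <= 0 ->
  \int[mu]_x f x <= \int[mu]_x (f x - (c x)%:E).
Proof.
move=> mf mc cp_fin c_le0.
pose s x := f x - (c x)%:E.
have mcE : measurable_fun setT (EFin \o c) by apply/measurable_EFinP.
have ms : measurable_fun setT s by apply: emeasurable_funB.
have mcp : measurable_fun setT (EFin \o c^\+%R).
  by rewrite -funerpos; exact: measurable_funepos.
have mcn : measurable_fun setT (EFin \o c^\-%R).
  by rewrite -funerneg; exact: measurable_funeneg.
have cp0 x : 0 <= (c^\+%R x)%:E by rewrite lee_fin funrpos_ge0.
have cn0 x : 0 <= (c^\-%R x)%:E by rewrite lee_fin funrneg_ge0.
have mfp := measurable_funepos mf; have mfn := measurable_funeneg mf.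
have msp := measurable_funepos ms; have msn := measurable_funeneg ms.
have split_c : \int[mu]_x (c x)%:E =
    \int[mu]_x (c^\+%R x)%:E - \int[mu]_x (c^\-%R x)%:E.
  by rewrite (integralE _ _ (EFin \o c)) funerpos funerneg.
have parts : \int[mu]_x f^\+ x + \int[mu]_x s^\- x + \int[mu]_x (c^\-%R x)%:E =
    \int[mu]_x s^\+ x + \int[mu]_x f^\- x + \int[mu]_x (c^\+%R x)%:E.
  rewrite -!ge0_integralD //; try exact: emeasurable_funD;
    try by move=> x _; exact: adde_ge0.
  by apply: eq_integral => x _; rewrite !funeposE !funenegE maxe0_subr_parts.
have fp_le : \int[mu]_x f^\+ x <= \int[mu]_x s^\+ x + \int[mu]_x (c^\+%R x)%:E.
  rewrite -ge0_integralD //; apply: ge0_le_integralT => // x.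
  by rewrite !funeposE maxe0_le_subr.
have sn_le : \int[mu]_x s^\- x <= \int[mu]_x f^\- x + \int[mu]_x (c^\+%R x)%:E.
  rewrite -ge0_integralD //; apply: ge0_le_integralT => // x.
  by rewrite !funenegE maxe0_oppe_subr_le.
rewrite split_c sube_le0 in c_le0.
rewrite integralE [leRHS]integralE.
by apply: lee_sub_of_parts parts fp_le sn_le c_le0 => //; apply: integral_ge0.
Qed.
End integral_comparison.

Local Close Scope ereal_scope.
Local Open Scope ring_scope.

Section measurable_generated.
Context {d : measure_display} {T : measurableType d}.

Lemma sigma_algebra_measurable_on (D : set T) :
  measurable D -> sigma_algebra D measurable.
Proof.
move=> mD; split=> [|A|F] *; first exact: measurable0.
  exact: measurableD.
exact: bigcupT_measurable.
Qed.

Lemma g_sigma_measurable {D : set T} {G : set (set T)} :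
  measurable D -> G `<=` measurable -> <<s D, G >> `<=` measurable.
Proof. by move=> mD; apply: smallest_sub; exact: sigma_algebra_measurable_on. Qed.

(* Row vectors carry no measurable structure here: the Borel hypotheses on
   [Lam] and [g] are stated through the generated set systems [borel_rV] and
   [borel_trip]. *)
Lemma measurable_fun_comp_generated {U : Type} {G : set (set U)} {d'}
    {V : measurableType d'} {D : set T} (f : T -> U) (L : U -> V) :
  measurable D -> (forall B, G B -> measurable (D `&` f @^-1` B)) ->
  (forall B, measurable B -> <<s G >> (L @^-1` B)) ->
  measurable_fun D (fun t => L (f t)).
Proof.
move=> mD fG LG _ B mB; rewrite comp_preimage.
apply: (smallest_sub _ fG (LG B mB)).
exact/sigma_algebra_image/sigma_algebra_measurable_on.
Qed.
End measurable_generated.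

Section product_sections.
Local Open Scope ereal_scope.
Context {d1 d2 d3 : measure_display} {T1 : measurableType d1}
  {T2 : measurableType d2} {T3 : measurableType d3} {R : realType}.
Implicit Types A : set T1.

Lemma measurable_fun_xsection_on A (f : T1 * T2 -> T3) x :
  measurable A -> A x -> measurable_fun (A `*` setT) f ->
  measurable_fun setT (fun y => f (x, y)).
Proof.
move=> mA Ax /(measurable_restrictT _ (measurableX mA measurableT)) mf.
have -> : (fun y => f (x, y)) = (fun y => (f \_ (A `*` setT)) (x, y)).
  by apply/funext => y; rewrite patchE mem_set.
exact: measurable_fun_pair2.
Qed.

Lemma measurable_fun_integral_xsection (mu : sigma_finite_measure T1 R) A
    (f : T1 * T2 -> R) :
  measurable A -> measurable_fun (A `*` setT) f ->
  measurable_fun setT (fun y => \int[mu]_(x in A) (f (x, y))%:E)%E.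
Proof.
move=> mA mf; pose F := (EFin \o f) \_ (A `*` setT).
have mF : measurable_fun setT F.
  apply/(measurable_restrictT _ (measurableX mA measurableT)).
  exact/measurable_EFinP.
have -> : (fun y => \int[mu]_(x in A) (f (x, y))%:E)%E =
    (fun y => \int[mu]_x F^\+ (x, y) - \int[mu]_x F^\- (x, y))%E.
  apply/funext => y; rewrite integral_mkcond.
  have -> : (fun x => (f (x, y))%:E) \_ A = F \o pair^~ y.
    by apply/funext => x; rewrite /F /= !patchE in_setX in_setT andbT.
  by rewrite integralE funepos_comp funeneg_comp.
apply: emeasurable_funB.
  exact: measurable_fun_fubini_tonelli_G (measurable_funepos mF) (funepos_ge0 F).
exact: measurable_fun_fubini_tonelli_G (measurable_funeneg mF) (funeneg_ge0 F).
Qed.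
End product_sections.

Section control_model.
Context {R : realType} {d : measure_display} {Omega : measurableType d}
  {n du : nat} {T : R}.
Local Notation control := (@ctrl R d Omega du).
Context {X : 'rV[R]_n -> control -> R -> Omega -> 'rV[R]_n}
  {Lam : 'rV[R]_n -> R} {g : R -> 'rV[R]_n -> 'rV[R]_du -> R}.

Let D0 : set (R * Omega) := `[0, T] `*` [set: Omega].
Let mD0 : measurable D0. Proof. exact: measurableX. Qed.

Lemma progressive_measurable {F : R -> set (set Omega)} {u : control} :
  0 <= T -> (forall A, F T A -> measurable A) -> progressive F T u ->
  forall j : 'I_du, measurable_fun D0 (fun p => u p.1 p.2 ord0 j).
Proof.
move=> T0 FT uprog j _ B mB.
have T_itv : 0 <= T <= T by rewrite T0 lexx.
apply: (g_sigma_measurable mD0 _ _ (uprog T T_itv j B mB)).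
by move=> _ [A [D [mA [_ [FD ->]]]]]; exact: measurableX mA (FT _ FD).
Qed.

Lemma measurable_reward {x} {u : control} :
  0 <= T ->
  (forall i : 'I_n, measurable_fun D0 (fun p => X x u p.1 p.2 ord0 i)) ->
  (forall j : 'I_du, measurable_fun D0 (fun p => u p.1 p.2 ord0 j)) ->
  (forall B : set R, measurable B -> @borel_rV R n (Lam @^-1` B)) ->
  (forall B : set R, measurable B ->
     @borel_trip R n du
       ((fun p : R * ('rV[R]_n * 'rV[R]_du) => g p.1 p.2.1 p.2.2) @^-1` B)) ->
  measurable_fun setT (reward T Lam g X x u).
Proof.
move=> T0 mX mU mLam mg.
have T_itv : `[0, T]%classic T by rewrite /= in_itv /= T0 lexx.
have mterminal : measurable_fun setT (fun om => Lam (X x u T om)).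
  apply: (measurable_fun_comp_generated (X x u T) Lam measurableT _ mLam).
  move=> _ [i [B [mB ->]]]; rewrite -comp_preimage.
  exact: (measurable_fun_xsection_on _ _ _ (measurable_itv _) T_itv (mX i)).
have mintegrand : measurable_fun D0 (fun p => g p.1 (X x u p.1 p.2) (u p.1 p.2)).
  apply: (measurable_fun_comp_generated (fun p => (p.1, (X x u p.1 p.2, u p.1 p.2)))
    (fun q => g q.1 q.2.1 q.2.2) mD0 _ mg).
  move=> _ [B [mB [->|[[i ->]|[j ->]]]]]; [|exact: mX i mD0 B mB|exact: mU j mD0 B mB].
  apply: measurableI mD0 _; rewrite -[X in measurable X]setTI.
  exact: (measurable_fst (T2 := Omega) measurableT B mB).
have mrunning : measurable_fun setT (fun om =>
    \int[lebesgue_measure]_(t in tint T) (g t (X x u t om) (u t om))%:E)%E.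
  exact: (measurable_fun_integral_xsection lebesgue_measure _ _
    (measurable_itv `[0, T]) mintegrand).
by apply: emeasurable_funD => //; exact/measurable_EFinP.
Qed.

Lemma UF_sub_U0 {P : probability Omega R} {m} {w : R -> Omega -> 'rV[R]_m}
    {Uset : set 'rV[R]_du} {x} {u : control} :
  0 <= T -> (forall A : set Omega, measurable A <-> filt P w T A) ->
  UF P T w Uset X x u -> U0 T Uset u.
Proof.
move=> T0 hF [Uu [uprog _]]; split => //.
by apply: progressive_measurable T0 _ uprog => A /hF.
Qed.
End control_model.

Theorem proposition1
  (R : realType) (d : measure_display) (Omega : measurableType d)
  (P : probability Omega R) (m n du : nat) (T : R)
  (w : R -> Omega -> 'rV[R]_m) (Uset : set 'rV[R]_du)
  (X : 'rV[R]_n -> ctrl du -> R -> Omega -> 'rV[R]_n)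
  (Lam : 'rV[R]_n -> R) (g : R -> 'rV[R]_n -> 'rV[R]_du -> R)
  (CL Cg : R) (cL cg : nat)
  (h : ctrl du -> (R -> 'rV[R]_m) -> R) :
  0 < T ->
  brownian_motion P T w ->
  (forall A : set Omega, measurable A <-> filt P w T A) ->
  (forall x u, U0 T Uset u ->
     (forall om, X x u 0 om = x) /\
     forall i : 'I_n, measurable_fun (`[0, T] `*` [set: Omega])
                        (fun p : R * Omega => X x u p.1 p.2 ord0 i)) ->
  (forall B : set R, measurable B -> @borel_rV R n (Lam @^-1` B)) ->
  (forall B : set R, measurable B ->
     @borel_trip R n du ((fun p : R * ('rV[R]_n * 'rV[R]_du) => g p.1 p.2.1 p.2.2) @^-1` B)) ->
  (forall y, `|Lam y| <= CL * (1 + vnorm y ^+ cL)) ->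
  (forall t y v, `|g t y v| <= Cg * (1 + vnorm y ^+ cg + vnorm v ^+ cg)) ->
  dual_feasible P T w Uset X h ->
  forall x : 'rV[R]_n,
    (ereal_sup [set Jval P T Lam g X x u | u in UF P T w Uset X x] <=
     \int[P]_om ereal_sup
        [set (reward T Lam g X x u om - (h u (fun t => w t om))%:E)%E | u in U0 T Uset])%E.
Proof.
move=> T_gt0 _ hF hX mLam mg _ _ hdual x.
have T0 := ltW T_gt0.
apply: ge_ereal_sup => _ [u uUF <-].
have uU0 := UF_sub_U0 T0 hF uUF.
have [_ mX] := hX x u uU0.
have [mh [h_pos_fin h_le0]] := hdual x u uUF.
have mr := measurable_reward T0 mX uU0.2 mLam mg.
apply: le_trans (integral_le_subr P mr mh h_pos_fin h_le0) _.
by apply: le_integralT => om; apply: ereal_sup_ubound; exists u.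
Qed.
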